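(* Let $G$ be a second countable locally compact Hausdorff groupoid with a fixed left Haar system $\lambda=\{\lambda^u\}_{u\in G^0}$, and let $(\Phi,\Psi)$ be a complementary pair of $N$-functions both satisfying the $\Delta_2$-condition. Then $\check A_\Phi(G)$ is a left and right $C_0(G^0)$-module under the actions $(bh)(x)=b(d(x))h(x)$ and $(hb)(x)=h(x)b(r(x))$ for $b\in C_0(G^0)$, $h\in\check A_\Phi(G)$; that is, $bh,hb\in\check A_\Phi(G)$ for all such $b,h$.
   Context: $G^0$ is the unit space, $r(x)=xx^{-1}$, $d(x)=x^{-1}x$, $G^u=r^{-1}(u)$; the left Haar system consists of positive Radon measures $\lambda^u$ with support $G^u$, $u\mapsto\int f d\lambda^u$ continuous for $f\in C_c(G)$, and $\int f(xy)d\lambda^{d(x)}(y)=\int f(y)d\lambda^{r(x)}(y)$. An $N$-function is a continuous even convex $\Phi:\mathbb R\to[0,\infty)$ with $\Phi(x)=0$ iff $x=0$, $\Phi(x)/x\to0$ as $x\to0$, $\to\infty$ as $x\to\infty$; complementary function $\Psi(y)=\sup_{x\ge0}(x|y|-\Phi(x))$. $\Delta_2$: there is $k>0$ with $\Phi(2x)\le k\Phi(x)$ for all $x\ge0$ ($G$ non-compact), resp. for $x\ge x_0$, some $x_0>0$ ($G$ compact). For $u\in G^0$, $L^\Phi(G^u)$ is the space of measurable $f$ on $G^u$ with $\int\Phi(\alpha|f|)d\lambda^u<\infty$ for some $\alpha>0$, gauge norm $\|f\|^0_\Phi=\inf\{k>0:\int\Phi(|f|/k)d\lambda^u\le1\}$;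 similarly for $\Psi$. For $f\in C_c(G)$, $f^u=f|_{G^u}$ and $\check f(x)=f(x^{-1})$. $E_0^\Phi$ (resp. $E_0^\Psi$) is the Banach space of sections $\xi=(\xi^u)$ with $\xi^u\in L^\Phi(G^u)$ (resp. $L^\Psi(G^u)$), locally close to $C_c(G)$ in the gauge norm, with $u\mapsto\|\xi^u\|^0$ vanishing at infinity, normed by $\sup_u\|\xi^u\|^0$. $\mathcal K(G)$ is the collection of compact subsets of $G$ with nonempty interior intersecting $G^0$. For $P\in\mathcal K(G)$, $E_0^\Phi(P)$ (resp. $E_0^\Psi(P)$) is the closure in $E_0^\Phi$ (resp. $E_0^\Psi$) of $\{f\in C_c(G):\operatorname{supp}f\subseteq P\}$. For $g\in E_0^\Psi(P)$, $f\in E_0^\Phi(P)$, $(g*\check f)(x)=\int_{G^{r(x)}}g^{r(x)}(y)f^{d(x)}(x^{-1}y)d\lambda^{r(x)}(y)$. $\check A_{\Phi,P}(G)$ is the set of $h\in C_c(G)$ of the form $h=\sum_{n=1}^\infty g_n*\check f_n$ with $f_n\in E_0^\Phi(P)$, $g_n\in E_0^\Psi(P)$ and $\sum_n\|f_n\|^0_\Phi\|g_n\|^0_\Psi<\infty$, and $\check A_\Phi(G)=\bigcup_{P\in\mathcal K(G)}\check A_{\Phi,P}(G)$. *)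

From HB Require Import structures.
From mathcomp Require Import all_boot all_order all_algebra.
From mathcomp Require Import all_classical all_reals all_analysis.
From mathcomp Require Import complex.
Import Order.TTheory GRing.Theory Num.Theory.
Import numFieldNormedType.Exports.

Set Implicit Arguments.
Unset Strict Implicit.
Unset Printing Implicit Defensive.

Local Open Scope ring_scope.
Local Open Scope classical_set_scope.

(* Topological groupoids (Paterson's axioms, composable pairs G^(2)   *)
(* given by the relation [gcomp]).                                    *)
Record topological_groupoid (T : topologicalType) := TGroupoid {
  gcomp : T -> T -> Prop;
  gmul  : T -> T -> T;               (* x y, meaningful on G^(2) *)
  ginv  : T -> T;
  gassoc : forall x y z, gcomp x y -> gcomp y z ->
    [/\ gcomp (gmul x y) z, gcomp x (gmul y z) &
        gmul (gmul x y) z = gmul x (gmul y z)];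
  ginvK : forall x, ginv (ginv x) = x;
  gcomp_inv : forall x, gcomp (ginv x) x;
  gcancel : forall x y, gcomp x y ->
    gmul (ginv x) (gmul x y) = y /\ gmul (gmul x y) (ginv y) = x;
  ginv_cont : continuous ginv;
  gmul_cont : {within [set p : T * T | gcomp p.1 p.2],
                 continuous (fun p : T * T => gmul p.1 p.2)} }.

Section GroupoidDefs.
Variables (T : topologicalType) (G : topological_groupoid T).

Definition grange (x : T) : T := gmul G x (ginv G x).
Definition gsource (x : T) : T := gmul G (ginv G x) x.
Definition unit_space : set T := [set u | exists x, grange x = u].
Definition fiber (u : T) : set T := [set x | grange x = u].

End GroupoidDefs.

Notation borelT T := (g_sigma_algebraType (@open T)).

Section Haar.
Variables (R : realType) (T : ptopologicalType) (G : topological_groupoid T).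

Definition support (f : T -> R) : set T := closure [set x | f x != 0].

Definition Cc_real (f : T -> R) := continuous f /\ compact (support f).

Definition radon (mu : {measure set (borelT T) -> \bar R}) :=
  [/\ (forall K : set T, compact K -> (mu K < +oo)%E),
      (forall A : set (borelT T), measurable A ->
          mu A = ereal_inf [set mu U | U in [set U : set T | open U /\ A `<=` U]]) &
      (forall U : set T, open U ->
          mu U = ereal_sup [set mu K | K in [set K : set T | compact K /\ K `<=` U]])].

Definition measure_support_is (mu : {measure set (borelT T) -> \bar R})
  (A : set T) :=
  forall x, (forall U : set T, open U -> U x -> (0 < mu U)%E) <-> A x.

Definition left_haar_system (lam : T -> {measure set (borelT T) -> \bar R}) :=
  [/\ (forall u, unit_space G u -> radon (lam u)),
      (forall u, unit_space G u -> measure_support_is (lam u) (fiber G u)),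
      (forall f, Cc_real f ->
         {within unit_space G, continuous (fun u => Rintegral (lam u) setT f)}) &
      (forall x f, Cc_real f ->
         Rintegral (lam (gsource G x)) (fiber G (gsource G x))
                   (fun y => f (gmul G x y))
         = Rintegral (lam (grange G x)) setT f)].

End Haar.

Section NFun.
Variable (R : realType).

Definition Nfunction (Phi : R -> R) :=
  [/\ [/\ continuous Phi, (forall x, Phi (- x) = Phi x) & (forall x, 0 <= Phi x)],
      (forall x y t : R, 0 <= t <= 1 ->
          Phi (t * x + (1 - t) * y) <= t * Phi x + (1 - t) * Phi y),
      (forall x, (Phi x = 0) <-> (x = 0)),
      ((fun x => Phi x / x) @ 0^' --> (0 : R)) &
      ((fun x => Phi x / x) @ +oo%R --> +oo%R)].

Definition complementary (Phi Psi : R -> R) :=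
  forall y, Psi y = sup [set x * `|y| - Phi x | x in [set x : R | 0 <= x]].

Definition Delta2 (T : topologicalType) (Phi : R -> R) :=
  (~ compact [set: T] ->
     exists k : R, 0 < k /\ forall x, 0 <= x -> Phi (2 * x) <= k * Phi x) /\
  (compact [set: T] ->
     exists k x0 : R, [/\ 0 < k, 0 < x0 &
        forall x, x0 <= x -> Phi (2 * x) <= k * Phi x]).

End NFun.

Section Complex.
Variables (R : realType).

Definition cre (z : R[i]) : R := complex.Re z.
Definition cim (z : R[i]) : R := complex.Im z.
Definition cabs (z : R[i]) : R := Num.sqrt (cre z ^+ 2 + cim z ^+ 2).

Variable (T : ptopologicalType).

Definition ccontinuous (f : T -> R[i]) :=
  continuous (fun x => cre (f x)) /\ continuous (fun x => cim (f x)).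

Definition csupport (f : T -> R[i]) : set T := closure [set x | f x != 0].

Definition Cc (f : T -> R[i]) := ccontinuous f /\ compact (csupport f).

Definition cmeasurable (A : set (borelT T)) (f : T -> R[i]) :=
  measurable_fun A (fun x => cre (f x)) /\ measurable_fun A (fun x => cim (f x)).

Definition cintegral (mu : {measure set (borelT T) -> \bar R}) (A : set T)
  (f : T -> R[i]) : R[i] :=
  Complex (Rintegral mu A (fun x => cre (f x))) (Rintegral mu A (fun x => cim (f x))).

End Complex.

Section Orlicz.
Variables (R : realType) (T : ptopologicalType) (G : topological_groupoid T)
  (lam : T -> {measure set (borelT T) -> \bar R}).

Local Notation G0 := (unit_space G).
Local Notation Gu := (fiber G).

Definition inL (Phi : R -> R) (u : T) (f : T -> R[i]) :=
  cmeasurable (Gu u) f /\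
  exists alpha : R, 0 < alpha /\
    (\int[lam u]_(x in Gu u) (Phi (alpha * cabs (f x)))%:E < +oo)%E.

Definition gauge (Phi : R -> R) (u : T) (f : T -> R[i]) : \bar R :=
  ereal_inf [set k%:E | k in [set k : R | 0 < k /\
    (\int[lam u]_(x in Gu u) (Phi (cabs (f x) / k))%:E <= 1)%E]].

(* a section xi = (xi^u) is represented by a single function on G,
   xi^u being its restriction to G^u *)
Definition inE0 (Phi : R -> R) (xi : T -> R[i]) :=
  [/\ (forall u, G0 u -> inL Phi u xi),
      (forall u, G0 u -> forall eps : R, 0 < eps ->
         exists f, Cc f /\ exists U : set T, [/\ open U, U u &
           forall v, G0 v -> U v -> (gauge Phi v (fun x => (xi x - f x)%R) < eps%:E)%E]) &
      (forall eps : R, 0 < eps -> exists K : set T, [/\ compact K, K `<=` G0 &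
         forall u, G0 u -> ~ K u -> (gauge Phi u xi < eps%:E)%E])].

Definition E0norm (Phi : R -> R) (xi : T -> R[i]) : \bar R :=
  ereal_sup [set gauge Phi u xi | u in G0].

Definition inE0P (Phi : R -> R) (P : set T) (xi : T -> R[i]) :=
  inE0 Phi xi /\
  forall eps : R, 0 < eps -> exists f, [/\ Cc f, csupport f `<=` P &
     (E0norm Phi (fun x => (xi x - f x)%R) < eps%:E)%E].

Definition KG (P : set T) := compact P /\ (P° `&` G0 !=set0).

Definition gconv (g f : T -> R[i]) (x : T) : R[i] :=
  cintegral (lam (grange G x)) (Gu (grange G x))
    (fun y => g y * f (gmul G (ginv G x) y)).

Definition inAP (Phi Psi : R -> R) (P : set T) (h : T -> R[i]) :=
  Cc h /\
  exists (f g : nat -> T -> R[i]),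
    [/\ (forall n, inE0P Phi P (f n)),
        (forall n, inE0P Psi P (g n)),
        (\sum_(0 <= n <oo) (E0norm Phi (f n) * E0norm Psi (g n)) < +oo)%E &
        forall x,
          (fun N => \sum_(n < N) cre (gconv (g n) (f n) x)) @ \oo --> cre (h x) /\
          (fun N => \sum_(n < N) cim (gconv (g n) (f n) x)) @ \oo --> cim (h x)].

Definition inA (Phi Psi : R -> R) (h : T -> R[i]) :=
  exists P, KG P /\ inAP Phi Psi P h.

End Orlicz.

Definition C0_units (R : realType) (T : ptopologicalType)
  (G : topological_groupoid T) (b : T -> R[i]) :=
  {within unit_space G, continuous (fun x => cre (b x))} /\
  {within unit_space G, continuous (fun x => cim (b x))} /\
  (forall eps : R, 0 < eps -> exists K : set T,
     [/\ compact K, K `<=` unit_space G &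
      forall u, unit_space G u -> ~ K u -> cabs (b u) < eps]).

(* Write m := k \o r with k bounded and continuous on G^0.  Multiplication by m
   maps E_0^Phi(P) into itself and multiplies its norm by at most sup |k|: the
   gauge norm is monotone under pointwise domination, and m is constant on every
   fibre G^u, which keeps fibrewise measurability.  For y in G^(r x) one has
   r (x^-1 y) = d x and r y = r x, so multiplying every f_n by b \o r multiplies
   (g_n * f_n^check)(x) by b (d x), and multiplying every g_n by b \o r multiplies
   it by b (r x).  The integral of a complex function is taken componentwise and,
   without integrability, a real integral is only known to be homogeneous, not
   additive; so b is split as Re b + i Im b, each part scaling every term by a
   real or purely imaginary constant, and the two resulting series are
   interleaved into one representation of (b \o d) h, resp. h (b \o r). *)

From Pilot Require Import Defs.
From HB Require Import structures.
From mathcomp Require Import all_boot all_order all_algebra.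
From mathcomp Require Import all_classical all_reals all_analysis.
From mathcomp Require Import complex.
From mathcomp Require Import ring.
Import Order.TTheory GRing.Theory Num.Theory.
Import numFieldNormedType.Exports.
Local Open Scope ring_scope.
Local Open Scope classical_set_scope.

Lemma continuous_comp_within {T S U : topologicalType} {A : set S} {f : S -> U}
    {p : T -> S} :
  {within A, continuous f} -> continuous p -> (forall x, A (p x)) ->
  continuous (f \o p).
Proof.
move=> /subspace_continuousP fc pc pA x.
have pxA : p @ nbhs x --> within A (nbhs (p x)).
  move=> W /=; rewrite /within /= => /pc /=; rewrite nbhs_simpl /=.
  by apply: filterS => y /(_ (pA y)).
exact: cvg_trans (cvg_app f pxA) (fc _ (pA x)).
Qed.

Section GroupoidFacts.
Context {T : topologicalType} {G : topological_groupoid T}.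
Local Notation gm := (gmul G).
Local Notation gi := (ginv G).

Lemma gcomp_ginv z : gcomp G z (gi z).
Proof. by have := gcomp_inv G (gi z); rewrite ginvK. Qed.

Lemma gcomp_grange z : gcomp G (grange G z) z.
Proof. by have [] := gassoc (gcomp_ginv z) (gcomp_inv G z). Qed.

Lemma gmul_grange z : gm (grange G z) z = z.
Proof. by have [_] := gcancel (gcomp_ginv z); rewrite ginvK. Qed.

Lemma gcomp_gsource z : gcomp G z (gsource G z).
Proof. by have [] := gassoc (gcomp_ginv z) (gcomp_inv G z). Qed.

Lemma gcomp_gsource_grange u v : gsource G u = grange G v -> gcomp G u v.
Proof.
move=> uv; have := gcomp_gsource u; rewrite uv => cu.
by have [_ + _] := gassoc cu (gcomp_grange v); rewrite gmul_grange.
Qed.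

Lemma grange_gmul u v : gcomp G u v -> grange G (gm u v) = grange G u.
Proof.
move=> cuv; set w := gm u v.
have [cw _ _] := gassoc cuv (gcomp_ginv v).
have wu : gm w (gi v) = u by have [_ ->] := gcancel cuv.
have [_ cru ruw] := gassoc (gcomp_grange w) cw.
rewrite wu in cru; rewrite gmul_grange wu in ruw.
by have [_ ] := gcancel cru; rewrite -ruw.
Qed.

Lemma grange_idem z : grange G (grange G z) = grange G z.
Proof. exact: grange_gmul (gcomp_ginv z). Qed.

Lemma grange_ginv x : grange G (gi x) = gsource G x.
Proof. by rewrite /grange /gsource ginvK. Qed.

Lemma grange_ginv_gmul x y : grange G y = grange G x ->
  grange G (gm (gi x) y) = gsource G x.
Proof.
move=> yx; rewrite grange_gmul ?grange_ginv //.
by apply: gcomp_gsource_grange; rewrite /gsource ginvK yx.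
Qed.

Lemma continuous_grange : continuous (grange G).
Proof.
have -> : grange G = (fun p : T * T => gm p.1 p.2) \o (fun x => (x, gi x)) by [].
apply: (@continuous_comp_within _ _ _ _ _ (fun x => (x, gi x)) (@gmul_cont _ G)).
  move=> x.
  by apply: cvg_pair; [exact: cvg_id | exact: ginv_cont].
by move=> x; exact: gcomp_ginv.
Qed.

Lemma continuous_gsource : continuous (gsource G).
Proof.
have -> : gsource G = grange G \o gi by apply/funext => x /=; rewrite grange_ginv.
by move=> x; apply: continuous_comp; [exact: ginv_cont | exact: continuous_grange].
Qed.

End GroupoidFacts.

(* Variants of [ge0_le_integral], [ge0_integralZl] and [RintegralZl] without
   measurability or integrability assumptions: the integrands of [gconv] are
   not known to be measurable. *)
Section IntegralFacts.
Import HBNNSimple.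
Context {d} {X : measurableType d} {R : realType} {mu : {measure set X -> \bar R}}.

Lemma ge0_le_integral' D (f g : X -> \bar R) : (forall x, D x -> 0 <= f x)%E ->
  (forall x, D x -> f x <= g x)%E ->
  (\int[mu]_(x in D) f x <= \int[mu]_(x in D) g x)%E.
Proof.
move=> f0 fg.
have g0 x : D x -> (0 <= g x)%E by move=> Dx; exact: le_trans (f0 _ Dx) (fg _ Dx).
rewrite (ge0_integralE mu f0) (ge0_integralE mu g0) /=.
apply: ereal_sup_le => _ [h hf <-]; exists h => //= x.
apply: le_trans (hf x) _; rewrite /patch; case: ifPn => //; rewrite inE => Dx.
exact: fg.
Qed.

Lemma ge0_integralZl' D (f : X -> \bar R) (k : R) : 0 < k ->
  (forall x, D x -> 0 <= f x)%E ->
  (\int[mu]_(x in D) (k%:E * f x) = k%:E * \int[mu]_(x in D) f x)%E.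
Proof.
move=> k0 f0.
have kf0 x : D x -> (0 <= k%:E * f x)%E.
  by move=> Dx; apply: mule_ge0; [rewrite lee_fin ltW | exact: f0].
rewrite (ge0_integralE mu kf0) (ge0_integralE mu f0) /= erestrict_scale.
rewrite -ereal_sup_pZl //; apply/eqP; rewrite eq_le; apply/andP; split.
- apply: ge_ereal_sup => _ [h hf <-].
  have ki0 : 0 <= k^-1 by rewrite invr_ge0 ltW.
  pose h' := scale_nnsfun h ki0.
  have -> : sintegral mu h = sintegral mu (cst k \* h').
    by congr (sintegral mu _); apply/funext => x /=; rewrite mulrA divff ?mul1r ?gt_eqF.
  rewrite sintegralrM; apply: ereal_sup_ubound; exists (sintegral mu h') => //.
  by exists h' => // x /=; rewrite EFinM lee_pdivrMl //; exact: hf.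
- apply: ereal_sup_le => _ [_ [h hf <-] <-].
  exists (scale_nnsfun h (ltW k0)); last by rewrite -sintegralrM.
  by move=> x /=; rewrite EFinM lee_pmul2l ?lte_fin.
Qed.

Lemma RintegralZl' D (f : X -> R) (k : R) :
  Rintegral mu D (fun x => k * f x) = k * Rintegral mu D f.
Proof.
have fineZB (c : R) (a b : \bar R) : 0 < c -> (0 <= a)%E -> (0 <= b)%E ->
    fine (c%:E * a - c%:E * b)%E = c * fine (a - b)%E.
  move=> c0; have cy : (c%:E * +oo = +oo)%E by rewrite mulry gtr0_sg // mul1e.
  by case: a => [a||] //; case: b => [b||] //= *; rewrite ?cy //= ?mulr0 // mulrBr.
have fineBC (a b : \bar R) : (0 <= a)%E -> (0 <= b)%E ->
    fine (a - b)%E = - fine (b - a)%E.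
  by case: a => [a||] //; case: b => [b||] //= *; rewrite ?opprB ?oppr0.
rewrite /Rintegral.
have -> : (fun x => (k * f x)%:E) = (fun x => (k%:E * (f x)%:E)%E).
  by apply/funext => x; rewrite EFinM.
rewrite integralE [in RHS]integralE.
set fp := ((fun x => (f x)%:E)^\+)%E; set fn := ((fun x => (f x)%:E)^\-)%E.
have fp0 x : D x -> (0 <= fp x)%E by move=> _; exact: funepos_ge0.
have fn0 x : D x -> (0 <= fn x)%E by move=> _; exact: funeneg_ge0.
have ifp0 : (0 <= \int[mu]_(x in D) fp x)%E by exact: integral_ge0.
have ifn0 : (0 <= \int[mu]_(x in D) fn x)%E by exact: integral_ge0.
have [k0|k0|<-] := ltgtP 0 k.
- by rewrite ge0_funeposM ?ge0_funenegM ?ltW // !ge0_integralZl' // fineZB.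
- rewrite le0_funeposM ?le0_funenegM ?ltW // -EFinN.
  by rewrite !ge0_integralZl' ?oppr_gt0 // fineZB ?oppr_gt0 // fineBC // mulrNN.
- rewrite mul0r -integralE integral0_eq // => x _.
  by rewrite mul0e.
Qed.

End IntegralFacts.

Section ComplexFacts.
Context {R : realType}.
Local Open Scope complex_scope.
Implicit Types z w : R[i].

Lemma cabs_ge0 z : 0 <= cabs z.
Proof. exact: sqrtr_ge0. Qed.

Lemma cabsM z w : cabs (z * w) = cabs z * cabs w.
Proof.
case: z w => [a b] [c e]; rewrite /cabs /cre /cim /=.
by rewrite -sqrtrM ?addr_ge0 ?sqr_ge0 //; congr Num.sqrt; ring.
Qed.

Lemma creM z w : cre (z * w) = cre z * cre w - cim z * cim w.
Proof. by case: z w => [? ?] [? ?]. Qed.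

Lemma cimM z w : cim (z * w) = cre z * cim w + cim z * cre w.
Proof. by case: z w => [? ?] [? ?]. Qed.

Lemma creD z w : cre (z + w) = cre z + cre w.
Proof. by case: z w => [? ?] [? ?]. Qed.

Lemma cimD z w : cim (z + w) = cim z + cim w.
Proof. by case: z w => [? ?] [? ?]. Qed.

Lemma normr_cre_le z : `|cre z| <= cabs z.
Proof. by rewrite /cabs -sqrtr_sqr ler_wsqrtr // lerDl sqr_ge0. Qed.

Lemma normr_cim_le z : `|cim z| <= cabs z.
Proof. by rewrite /cabs -sqrtr_sqr ler_wsqrtr // lerDr sqr_ge0. Qed.

Lemma cabs_real (a : R) : cabs a%:C = `|a|.
Proof. by rewrite /cabs /cre /cim /= expr0n addr0 sqrtr_sqr. Qed.

Lemma cabsi : cabs 'i = 1 :> R.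
Proof. by rewrite /cabs /cre /cim /= expr0n expr1n add0r sqrtr1. Qed.

Context {T : ptopologicalType} {mu : {measure set (borelT T) -> \bar R}}.
Implicit Types (D : set T) (f g : T -> R[i]).

Lemma eq_cintegral D f g : {in D, f =1 g} -> cintegral mu D f = cintegral mu D g.
Proof.
by move=> fg; rewrite /cintegral; congr Complex; apply: eq_Rintegral => x /fg ->.
Qed.

Lemma cintegralZl_real D f (a : R) :
  cintegral mu D (fun y => a%:C * f y) = a%:C * cintegral mu D f.
Proof.
rewrite /cintegral.
have -> : (fun y => cre (a%:C * f y)) = (fun y => a * cre (f y)).
  by apply/funext => y; rewrite /cre /cim; case: (f y) => ? ? /=; ring.
have -> : (fun y => cim (a%:C * f y)) = (fun y => a * cim (f y)).
  by apply/funext => y; rewrite /cre /cim; case: (f y) => ? ? /=; ring.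
by rewrite !RintegralZl' [RHS]/GRing.mul /=; apply: f_equal2; ring.
Qed.

Lemma cintegralMil D f : cintegral mu D (fun y => 'i * f y) = 'i * cintegral mu D f.
Proof.
rewrite /cintegral.
have -> : (fun y => cre ('i * f y)) = (fun y => -1 * cim (f y)).
  by apply/funext => y; rewrite /cre /cim; case: (f y) => ? ? /=; ring.
have -> : (fun y => cim ('i * f y)) = (fun y => cre (f y)).
  by apply/funext => y; rewrite /cre /cim; case: (f y) => ? ? /=; ring.
by rewrite RintegralZl' [RHS]/GRing.mul /=; apply: f_equal2; ring.
Qed.

End ComplexFacts.

Section NfunctionFacts.
Context {R : realType} {Phi : R -> R}.
Hypothesis NPhi : Nfunction Phi.

Lemma Nfunction_ge0 x : 0 <= Phi x.
Proof. by case: NPhi => -[]. Qed.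

Lemma Nfunction0 : Phi 0 = 0.
Proof. by case: NPhi => _ _ /(_ 0) [_ ->]. Qed.

Lemma Nfunction_le x y : 0 <= x -> x <= y -> Phi x <= Phi y.
Proof.
move=> x0; have [-> xy|y0 xy] := eqVneq y 0.
  by have -> : x = 0 by apply/eqP; rewrite eq_le xy x0.
have yp : 0 < y by rewrite lt_neqAle eq_sym y0 (le_trans x0 xy).
have t01 : 0 <= x / y <= 1 by rewrite divr_ge0 ?(ltW yp) //= ler_pdivrMr // mul1r.
have [_ cvx _ _ _] := NPhi.
have := cvx y 0 _ t01; rewrite mulr0 addr0 mulfVK ?gt_eqF // Nfunction0 mulr0 addr0.
move=> /le_trans; apply; apply: ler_piMl; [exact: Nfunction_ge0 | by case/andP: t01].
Qed.

End NfunctionFacts.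

Section CcFacts.
Context {R : realType} {T : ptopologicalType}.
Implicit Types c m : T -> R[i].

Lemma ccontinuousM c m : ccontinuous c -> ccontinuous m ->
  ccontinuous (fun z => c z * m z).
Proof.
case=> c1 c2 [m1 m2].
have cM (s t : T -> R) : continuous s -> continuous t -> continuous (s \* t).
  by move=> sc tc x; apply: continuousM; [exact: sc | exact: tc].
split=> x.
- have -> : (fun x => cre (c x * m x)) =
      (fun x => cre (c x) * cre (m x) - cim (c x) * cim (m x)).
    by apply/funext => y; rewrite /cre /cim; case: (c y) => ? ?; case: (m y) => ? ? /=.
  by apply: (@continuousB _ _ _ (fun x => cre (c x) * cre (m x))); apply: cM.
- have -> : (fun x => cim (c x * m x)) =
      (fun x => cre (c x) * cim (m x) + cim (c x) * cre (m x)).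
    by apply/funext => y; rewrite /cre /cim; case: (c y) => ? ?; case: (m y) => ? ? /=.
  by apply: (@continuousD _ _ _ (fun x => cre (c x) * cim (m x))); apply: cM.
Qed.

Lemma csupportMr {c m} : csupport (fun z => c z * m z) `<=` csupport c.
Proof. by apply: closureS => z /=; apply: contra_neq => ->; rewrite mul0r. Qed.

Lemma Cc_mulr c m : Cc c -> ccontinuous m -> Cc (fun z => c z * m z).
Proof.
case=> cc ck mc; split; first exact: ccontinuousM.
by apply: subclosed_compact ck csupportMr; exact: closed_closure.
Qed.

Lemma Cc_mull c m : ccontinuous m -> Cc c -> Cc (fun z => m z * c z).
Proof. by move=> mc cc; under eq_fun do rewrite mulrC; exact: Cc_mulr. Qed.

End CcFacts.

(* The functions k \o grange G with k bounded and continuous on the unit space. *)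
Definition range_multiplier {R : realType} {T : ptopologicalType}
    (G : topological_groupoid T) (m : T -> R[i]) (M : R) :=
  [/\ ccontinuous m, forall z, m (grange G z) = m z & forall z, cabs (m z) <= M].

Section Multipliers.
Context {R : realType} {T : ptopologicalType} {G : topological_groupoid T}
  {lam : T -> {measure set (borelT T) -> \bar R}} {Phi : R -> R}.
Hypothesis NPhi : Nfunction Phi.
Local Notation gauge := (gauge G lam Phi).
Local Notation E0norm := (E0norm G lam Phi).
Implicit Types (f m : T -> R[i]) (M : R).

Lemma gauge_ge0 u f : (0 <= gauge u f)%E.
Proof. by apply: le_ereal_inf_tmp => _ [k [k0 _] <-]; rewrite lee_fin ltW. Qed.

Lemma le_gauge {u f f' M} : 0 < M ->
  (forall x, fiber G u x -> cabs (f' x) <= M * cabs (f x)) ->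
  (gauge u f' <= M%:E * gauge u f)%E.
Proof.
move=> M0 ff'; rewrite /Defs.gauge -ereal_inf_pZl //.
apply: ereal_inf_le_tmp => _ [_ [k [k0 hk] <-] <-].
exists (M * k); last by rewrite EFinM.
split; first by rewrite mulr_gt0.
apply: le_trans hk; apply: ge0_le_integral' => x ux; rewrite lee_fin.
  exact: Nfunction_ge0.
apply: Nfunction_le => //; first by rewrite divr_ge0 ?cabs_ge0 // ltW ?mulr_gt0.
by rewrite invfM mulrA ler_pM2r ?invr_gt0 // ler_pdivrMr // mulrC ff'.
Qed.

Lemma E0norm_ge0 f : (0 <= E0norm f)%E.
Proof.
apply: le_trans (gauge_ge0 (grange G point) f) _.
rewrite /Defs.E0norm; apply: (@ereal_sup_ubound _ [set gauge u f | u in unit_space G]).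
by exists (grange G point) => //; exists point.
Qed.

Lemma le_E0norm {f f' M} : 0 < M ->
  (forall u, unit_space G u -> (gauge u f' <= M%:E * gauge u f)%E) ->
  (E0norm f' <= M%:E * E0norm f)%E.
Proof.
move=> M0 ff'; apply: ge_ereal_sup => _ [u Gu <-].
apply: le_trans (ff' u Gu) _; apply: lee_wpmul2l; first by rewrite lee_fin ltW.
by apply: (@ereal_sup_ubound _ [set gauge u f | u in unit_space G]); exists u.
Qed.

Lemma E0norm_mulr {m M} f : 0 < M -> (forall z, cabs (m z) <= M) ->
  (E0norm (fun z => (f z * m z)%R) <= M%:E * E0norm f)%E.
Proof.
move=> M0 mM; apply: le_E0norm => // u _; apply: le_gauge => // x _.
by rewrite cabsM mulrC ler_wpM2r ?cabs_ge0.
Qed.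

Lemma cmeasurableMr {D : set (borelT T)} {f} (c : R[i]) :
  cmeasurable D f -> cmeasurable D (fun z => f z * c).
Proof.
case=> mre mim; split.
- have -> : (fun z => cre (f z * c)) =
      (fun z => cre (f z) * cre c - cim (f z) * cim c).
    by apply/funext => z; rewrite /cre /cim; case: (f z) => ? ?; case: c => ? ? /=.
  apply: measurable_realfun.measurable_funB;
    by apply: measurable_realfun.measurable_funM => //; exact: measurable_cst.
- have -> : (fun z => cim (f z * c)) =
      (fun z => cre (f z) * cim c + cim (f z) * cre c).
    by apply/funext => z; rewrite /cre /cim; case: (f z) => ? ?; case: c => ? ? /=.
  apply: measurable_realfun.measurable_funD;
    by apply: measurable_realfun.measurable_funM => //; exact: measurable_cst.
Qed.

Lemma inL_mulr {u f m M} : 0 < M -> range_multiplier G m M ->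
  inL G lam Phi u f -> inL G lam Phi u (fun z => f z * m z).
Proof.
move=> M0 [_ mr mM] [mf [a [a0 ia]]]; split.
  have [mre mim] := cmeasurableMr (m u) mf.
  by split; [move: mre | move: mim];
    apply: eq_measurable_fun => z /[1!inE] <-; rewrite mr.
exists (a / M); split; first by rewrite divr_gt0.
apply: le_lt_trans ia; apply: ge0_le_integral' => x _; rewrite lee_fin.
  exact: Nfunction_ge0.
apply: Nfunction_le => //; first by rewrite mulr_ge0 ?cabs_ge0 ?divr_ge0 ?ltW.
rewrite cabsM; apply: (@le_trans _ _ (a / M * (cabs (f x) * M))).
  apply: ler_wpM2l; first by rewrite divr_ge0 ?ltW.
  by apply: ler_wpM2l; first exact: cabs_ge0.
by rewrite mulrCA mulfVK ?gt_eqF // mulrC.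
Qed.

Lemma inE0P_mulr {P f m M} : 0 < M -> range_multiplier G m M ->
  inE0P G lam Phi P f -> inE0P G lam Phi P (fun z => f z * m z).
Proof.
move=> M0 mRM [[fL floc fvan] fapp]; have [mc _ mM] := mRM.
have gauge_mul g u : (gauge u (fun z => (g z * m z)%R) <= M%:E * gauge u g)%E.
  by apply: le_gauge => // x _; rewrite cabsM mulrC ler_wpM2r ?cabs_ge0.
have gauge_diff (c : T -> R[i]) u :
    (gauge u (fun z => (f z * m z - c z * m z)%R)
       <= M%:E * gauge u (fun z => (f z - c z)%R))%E.
  by apply: le_gauge => // x _; rewrite -mulrBl cabsM mulrC ler_wpM2r ?cabs_ge0.
have scale_lt (e : R) (x : \bar R) : (x < (e / M)%:E)%E -> (M%:E * x < e%:E)%E.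
  by rewrite -lte_pdivlMl // EFinM muleC.
split; [split|].
- by move=> u Gu; exact: inL_mulr M0 mRM (fL u Gu).
- move=> u Gu e e0; have [c [cc [U [oU Uu hU]]]] := floc u Gu (e / M) (divr_gt0 e0 M0).
  exists (fun z => c z * m z); split; first exact: Cc_mulr.
  exists U; split => // v Gv Uv.
  exact: le_lt_trans (gauge_diff c v) (scale_lt _ _ (hU v Gv Uv)).
- move=> e e0; have [K [cK KG hK]] := fvan (e / M) (divr_gt0 e0 M0).
  exists K; split => // u Gu nK.
  exact: le_lt_trans (gauge_mul f u) (scale_lt _ _ (hK u Gu nK)).
- move=> e e0; have [c [cc cs hc]] := fapp (e / M) (divr_gt0 e0 M0).
  exists (fun z => c z * m z); split.
  + exact: Cc_mulr.
  + exact: subset_trans csupportMr cs.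
  + exact: le_lt_trans (le_E0norm M0 (fun u _ => gauge_diff c u)) (scale_lt _ _ hc).
Qed.

End Multipliers.

Definition interleave {V : Type} (u v : nat -> V) (n : nat) : V :=
  if odd n then v n./2 else u n./2.

Lemma cvg_half_index {U : topologicalType} (w : nat -> U) (l : U) :
  w @ \oo --> l -> (fun N => w N./2) @ \oo --> l.
Proof.
move=> wl; apply: cvg_trans wl => P [M _ PM]; exists M.*2 => // n /= Mn.
by apply: PM; rewrite /= -(half_double M) half_leq.
Qed.

Section InterleaveSeries.
Context {R : realType} {V : normedModType R}.
Implicit Types u v : nat -> V.

Lemma sum_interleave u v N :
  \sum_(n < N) interleave u v n =
  \sum_(k < N./2) (u k + v k) + (if odd N then u N./2 else 0).
Proof.
elim: N => [|N IH]; first by rewrite !big_ord0 addr0.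
rewrite big_ord_recr /= IH /interleave uphalf_half; case: (odd N) => /=.
  by rewrite add1n big_ord_recr /= addr0 addrA.
by rewrite add0n addr0.
Qed.

Lemma series_cvg_term0 {u} {a : V} :
  (fun N => \sum_(n < N) u n) @ \oo --> a -> u @ \oo --> 0.
Proof.
move=> ua; apply: cvg_series_cvg_0; apply/cvg_ex; exists a.
suff -> : series u = (fun N => \sum_(n < N) u n) by [].
by apply/funext => N; rewrite /series /= big_mkord.
Qed.

Lemma interleave_series_cvg {u v} {a b : V} :
  (fun N => \sum_(n < N) u n) @ \oo --> a ->
  (fun N => \sum_(n < N) v n) @ \oo --> b ->
  (fun N => \sum_(n < N) interleave u v n) @ \oo --> a + b.
Proof.
move=> ua vb.
have uvab : (fun N => \sum_(n < N) (u n + v n)) @ \oo --> a + b.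
  by under eq_fun do rewrite big_split /=; exact: cvgD.
under eq_fun do rewrite sum_interleave.
rewrite -[a + b]addr0; apply: cvgD; first exact: cvg_half_index uvab.
have /cvg_half_index/cvgrPdist_lt uh0 := series_cvg_term0 ua.
apply/cvgrPdist_lt => e e0; apply: filterS (uh0 e e0) => N.
by case: odd => // _; rewrite subrr normr0.
Qed.

End InterleaveSeries.

Lemma nneseries_interleave_le {R : realType} {p q : nat -> \bar R} :
  (forall n, 0 <= p n)%E -> (forall n, 0 <= q n)%E ->
  (\sum_(0 <= n <oo) interleave p q n <= \sum_(0 <= n <oo) (p n + q n))%E.
Proof.
move=> p0 q0; have pq0 n : (0 <= interleave p q n)%E by rewrite /interleave; case: odd.
have sum_double N :
    (\sum_(0 <= n < N.*2) interleave p q n = \sum_(0 <= k < N) (p k + q k))%E.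
  elim: N => [|N IH]; first by rewrite !big_geq.
  rewrite doubleS !big_nat_recr //= IH /interleave /= odd_double /= half_double.
  by rewrite uphalf_double addeA.
apply: lime_le; first exact: is_cvg_nneseries.
exists 0%N => // N _ /=; apply: le_trans (_ : _ <= \sum_(0 <= n < N.*2) _)%E _.
  by apply: lee_sum_nneg_natr => //; rewrite -addnn leq_addr.
by rewrite sum_double; apply: nneseries_lim_ge => n _; rewrite adde_ge0.
Qed.

Definition cseries_cvg {R : realType} (w : nat -> R[i]) (z : R[i]) :=
  (fun N => \sum_(n < N) cre (w n)) @ \oo --> cre z /\
  (fun N => \sum_(n < N) cim (w n)) @ \oo --> cim z.

Section ComplexSeries.
Context {R : realType}.
Implicit Types (u v w : nat -> R[i]) (a b c z : R[i]).

Lemma cseries_cvgZl c w z : cseries_cvg w z -> cseries_cvg (fun n => c * w n) (c * z).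
Proof.
case=> wre wim; split.
- under eq_fun do under eq_bigr do rewrite creM.
  under eq_fun do rewrite sumrB -!mulr_sumr.
  by rewrite creM; apply: cvgB; apply: cvgMl_tmp.
- under eq_fun do under eq_bigr do rewrite cimM.
  under eq_fun do rewrite big_split -!mulr_sumr /=.
  by rewrite cimM; apply: cvgD; apply: cvgMl_tmp.
Qed.

Lemma cseries_cvg_interleave u v a b :
  cseries_cvg u a -> cseries_cvg v b -> cseries_cvg (interleave u v) (a + b).
Proof.
case=> ua ua' [vb vb']; rewrite /cseries_cvg creD cimD.
have sumE (F : R[i] -> R) : (fun N => \sum_(n < N) F (interleave u v n)) =
    (fun N => \sum_(n < N) interleave (F \o u) (F \o v) n).
  by apply/funext => N; apply: eq_bigr => n _; rewrite /interleave; case: odd.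
by rewrite !sumE; split; exact: interleave_series_cvg.
Qed.

End ComplexSeries.

Section Representations.
Context {R : realType} {T : ptopologicalType} (G : topological_groupoid T)
  (lam : T -> {measure set (borelT T) -> \bar R}) (Phi Psi : R -> R).
Local Notation E0norm := (E0norm G lam).
Local Notation gconv := (gconv G lam).
Local Open Scope complex_scope.

Definition gconv_rep P (f g : nat -> T -> R[i]) (h : T -> R[i]) :=
  [/\ forall n, inE0P G lam Phi P (f n), forall n, inE0P G lam Psi P (g n),
      (\sum_(0 <= n <oo) (E0norm Phi (f n) * E0norm Psi (g n)) < +oo)%E &
      forall x, cseries_cvg (fun n => gconv (g n) (f n) x) (h x)].

Definition E0P_dominated (Th : R -> R) P (M : R) (f f' : nat -> T -> R[i]) :=
  forall n, inE0P G lam Th P (f' n) /\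
    (E0norm Th (f' n) <= M%:E * E0norm Th (f n))%E.

Lemma interleave_summable {P} {M : R} {f g f1 f2 g1 g2 : nat -> T -> R[i]} :
  (\sum_(0 <= n <oo) (E0norm Phi (f n) * E0norm Psi (g n)) < +oo)%E ->
  E0P_dominated Phi P M f f1 -> E0P_dominated Phi P M f f2 ->
  E0P_dominated Psi P M g g1 -> E0P_dominated Psi P M g g2 ->
  (\sum_(0 <= n <oo) (E0norm Phi (interleave f1 f2 n) *
                      E0norm Psi (interleave g1 g2 n)) < +oo)%E.
Proof.
move=> fin df1 df2 dg1 dg2.
pose a n := (E0norm Phi (f n) * E0norm Psi (g n))%E.
have MM0 : (0 <= (M * M)%:E)%E by rewrite lee_fin -expr2 sqr_ge0.
have normM (f' g' : nat -> T -> R[i]) n :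
    E0P_dominated Phi P M f f' -> E0P_dominated Psi P M g g' ->
    (E0norm Phi (f' n) * E0norm Psi (g' n) <= (M * M)%:E * a n)%E.
  move=> df dg; rewrite EFinM muleACA.
  by apply: lee_pmul; rewrite ?E0norm_ge0 ?(df n).2 ?(dg n).2.
pose p n := (E0norm Phi (f1 n) * E0norm Psi (g1 n))%E.
pose q n := (E0norm Phi (f2 n) * E0norm Psi (g2 n))%E.
have p0 n : (0 <= p n)%E by rewrite mule_ge0 ?E0norm_ge0.
have q0 n : (0 <= q n)%E by rewrite mule_ge0 ?E0norm_ge0.
rewrite (@eq_eseriesr _ _ (interleave p q)); last first.
  by move=> n _; rewrite /interleave; case: odd.
apply: le_lt_trans (nneseries_interleave_le p0 q0) _.
apply: (@le_lt_trans _ _ (\sum_(0 <= n <oo) (((M * M)%:E + (M * M)%:E) * a n))%E).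
  apply: lee_nneseries => [n _ _|n _]; first exact: adde_ge0 (p0 n) (q0 n).
  by rewrite (ge0_muleDl _ MM0 MM0); apply: leeD; apply: normM.
rewrite -EFinD nneseriesZl => [|n _]; last by rewrite mule_ge0 ?E0norm_ge0.
by apply: lte_mul_pinfty => //; rewrite lee_fin addr_ge0 // -expr2 sqr_ge0.
Qed.

Lemma gconv_rep_mul (c : T -> R[i]) {P h} {f g f1 f2 g1 g2 : nat -> T -> R[i]}
    {M : R} :
  gconv_rep P f g h ->
  E0P_dominated Phi P M f f1 -> E0P_dominated Phi P M f f2 ->
  E0P_dominated Psi P M g g1 -> E0P_dominated Psi P M g g2 ->
  (forall x n, gconv (g1 n) (f1 n) x = (cre (c x))%:C * gconv (g n) (f n) x) ->
  (forall x n, gconv (g2 n) (f2 n) x = 'i * (cim (c x))%:C * gconv (g n) (f n) x) ->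
  gconv_rep P (interleave f1 f2) (interleave g1 g2) (fun x => c x * h x).
Proof.
move=> [_ _ fin cv] df1 df2 dg1 dg2 conv1 conv2; split.
- by move=> n; rewrite /interleave; case: odd; [exact: (df2 _).1 | exact: (df1 _).1].
- by move=> n; rewrite /interleave; case: odd; [exact: (dg2 _).1 | exact: (dg1 _).1].
- exact: interleave_summable fin df1 df2 dg1 dg2.
move=> x; rewrite /= [c x]complexE mulrDl.
have -> : (fun n => gconv (interleave g1 g2 n) (interleave f1 f2 n) x) =
    interleave (fun n => (cre (c x))%:C * gconv (g n) (f n) x)
               (fun n => 'i * (cim (c x))%:C * gconv (g n) (f n) x).
  by apply/funext => n; rewrite /interleave; case: odd.
by apply: cseries_cvg_interleave; apply: cseries_cvgZl.
Qed.

End Representations.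

Section GconvScaling.
Context {R : realType} {T : ptopologicalType} (G : topological_groupoid T)
  (lam : T -> {measure set (borelT T) -> \bar R}).
Local Notation gconv := (gconv G lam).
Local Open Scope complex_scope.
Implicit Types (f g : T -> R[i]) (a : T -> R).

Lemma gconv_mulr_source g f a x :
  gconv g (fun z => f z * (a (grange G z))%:C) x = (a (gsource G x))%:C * gconv g f x.
Proof.
rewrite /Defs.gconv -cintegralZl_real; apply: eq_cintegral => y /[1!inE] yx.
by rewrite grange_ginv_gmul // mulrA mulrC.
Qed.

Lemma gconv_mull_range g f a x :
  gconv (fun y => g y * (a (grange G y))%:C) f x = (a (grange G x))%:C * gconv g f x.
Proof.
rewrite /Defs.gconv -cintegralZl_real; apply: eq_cintegral => y /[1!inE] yx.
by rewrite yx mulrAC mulrC.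
Qed.

Lemma gconv_mulri g f x : gconv (fun y => g y * 'i) f x = 'i * gconv g f x.
Proof.
rewrite /Defs.gconv -cintegralMil; apply: eq_cintegral => y _.
by rewrite mulrAC mulrC.
Qed.

End GconvScaling.

Lemma within_continuous_bounded {R : realType} {T : topologicalType} {A K : set T}
    {a : T -> R} :
  {within A, continuous a} -> compact K -> K `<=` A ->
  (forall u, A u -> ~ K u -> `|a u| <= 1) ->
  exists M, 1 <= M /\ forall u, A u -> `|a u| <= M.
Proof.
move=> ac cK KA aout.
have /compact_bounded [M [Mr aM]] :=
  continuous_compact (continuous_subspaceW KA ac) cK.
exists (`|M| + 1); split; first by rewrite lerDr.
move=> u Au; have [Ku|nKu] := pselect (K u).
  apply: (aM (`|M| + 1)); last by exists u.
  by rewrite (le_lt_trans (real_ler_norm Mr)) ?ltrDl.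
by apply: le_trans (aout u Au nKu) _; rewrite lerDr.
Qed.

Section C0Units.
Context {R : realType} {T : ptopologicalType} {G : topological_groupoid T}.
Implicit Types b : T -> R[i].

Lemma C0_units_bounded {b} : C0_units G b -> exists M, 1 <= M /\
  forall u, unit_space G u -> `|cre (b u)| <= M /\ `|cim (b u)| <= M.
Proof.
case=> bre [bim /(_ 1 ltr01) [K [cK KG bK]]].
have bre1 u : unit_space G u -> ~ K u -> `|cre (b u)| <= 1.
  by move=> Gu nKu; exact: le_trans (normr_cre_le _) (ltW (bK u Gu nKu)).
have bim1 u : unit_space G u -> ~ K u -> `|cim (b u)| <= 1.
  by move=> Gu nKu; exact: le_trans (normr_cim_le _) (ltW (bK u Gu nKu)).
have [M1 [M11 bM1]] := within_continuous_bounded bre cK KG bre1.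
have [M2 [M21 bM2]] := within_continuous_bounded bim cK KG bim1.
exists (Num.max M1 M2); split; first by rewrite le_max M11.
by move=> u Gu; rewrite !le_max bM1 ?bM2 ?orbT.
Qed.

Lemma continuous_range_within {S : topologicalType} {a : T -> S} :
  {within unit_space G, continuous a} -> continuous (fun z => a (grange G z)).
Proof.
move=> ac; have rangeG z : unit_space G (grange G z) by exists z.
exact: continuous_comp_within ac (@continuous_grange _ G) rangeG.
Qed.

Lemma range_multiplier_real {a : T -> R} {M : R} :
  {within unit_space G, continuous a} ->
  (forall u, unit_space G u -> `|a u| <= M) ->
  range_multiplier G (fun z => (a (grange G z))%:C%C) M.
Proof.
move=> ac aM; split => [|z|z]; rewrite ?grange_idem //.
  by split; [exact: continuous_range_within ac | exact: cst_continuous].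
by rewrite cabs_real aM //; exists z.
Qed.

Lemma range_multiplier_cst {c : R[i]} {M : R} :
  cabs c <= M -> range_multiplier G (fun=> c) M.
Proof. by move=> cM; split => //; split; exact: cst_continuous. Qed.

Lemma range_multiplierM {m1 m2 : T -> R[i]} {M1 M2 : R} : 0 <= M1 ->
  range_multiplier G m1 M1 -> range_multiplier G m2 M2 ->
  range_multiplier G (fun z => m1 z * m2 z) (M1 * M2).
Proof.
move=> M10 [c1 r1 b1] [c2 r2 b2]; split => [|z|z]; first exact: ccontinuousM.
  by rewrite r1 r2.
by rewrite cabsM ler_pM ?cabs_ge0.
Qed.

Lemma C0_units_ccontinuous_range {b} :
  C0_units G b -> ccontinuous (fun z => b (grange G z)).
Proof.
case=> bre [bim _].
by split; [exact: continuous_range_within bre | exact: continuous_range_within bim].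
Qed.

Lemma C0_units_ccontinuous_source {b} :
  C0_units G b -> ccontinuous (fun z => b (gsource G z)).
Proof.
case=> bre [bim _].
have srcG z : unit_space G (gsource G z) by exists (ginv G z); rewrite grange_ginv.
by split; [move: bre | move: bim] => ac;
  exact: continuous_comp_within ac (@continuous_gsource _ G) srcG.
Qed.

End C0Units.

Section Actions.
Context {R : realType} {T : ptopologicalType} {G : topological_groupoid T}
  {lam : T -> {measure set (borelT T) -> \bar R}}.
Local Open Scope complex_scope.

Lemma E0P_dominated_mulr {Th : R -> R} {P} {M : R} {f m} :
  Nfunction Th -> 0 < M -> range_multiplier G m M ->
  (forall n, inE0P G lam Th P (f n)) ->
  E0P_dominated G lam Th P M f (fun n z => f n z * m z).
Proof.
move=> NTh M0 mRM ef n; split; first exact (inE0P_mulr NTh M0 mRM (ef n)).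
by case: mRM => _ _ mM; exact (E0norm_mulr NTh (f n) M0 mM).
Qed.

Lemma E0P_dominated_refl {Th : R -> R} {P} {M : R} {f} : 1 <= M ->
  (forall n, inE0P G lam Th P (f n)) -> E0P_dominated G lam Th P M f f.
Proof. by move=> M1 ef n; split; rewrite ?lee_pemull ?E0norm_ge0 ?lee_fin. Qed.

Context {Phi Psi : R -> R} {b : T -> R[i]}.
Hypotheses (NPhi : Nfunction Phi) (NPsi : Nfunction Psi) (bC : C0_units G b).

Lemma gconv_rep_mul_source {P f g h} : gconv_rep G lam Phi Psi P f g h ->
  exists f' g', gconv_rep G lam Phi Psi P f' g' (fun x => b (gsource G x) * h x).
Proof.
move=> rep; have [ef eg _ _] := rep.
have [M [M1 bM]] := C0_units_bounded bC; have M0 : 0 < M := lt_le_trans ltr01 M1.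
have [bre [bim _]] := bC.
have mre := range_multiplier_real bre (fun u Gu => (bM u Gu).1).
have mim := range_multiplier_real bim (fun u Gu => (bM u Gu).2).
have mi : range_multiplier G (fun=> 'i) M by apply: range_multiplier_cst; rewrite cabsi.
exists (interleave (fun n z => f n z * (cre (b (grange G z)))%:C)
                   (fun n z => f n z * (cim (b (grange G z)))%:C)).
exists (interleave g (fun n z => g n z * 'i)).
apply: (gconv_rep_mul G lam Phi Psi (fun x => b (gsource G x)) rep).
- exact: E0P_dominated_mulr NPhi M0 mre ef.
- exact: E0P_dominated_mulr NPhi M0 mim ef.
- exact: E0P_dominated_refl M1 eg.
- exact: E0P_dominated_mulr NPsi M0 mi eg.
- by move=> x n /=; rewrite (gconv_mulr_source G lam _ _ (fun u => cre (b u))).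
- move=> x n /=; rewrite gconv_mulri.
  by rewrite (gconv_mulr_source G lam _ _ (fun u => cim (b u))) mulrA.
Qed.

Lemma gconv_rep_mul_range {P f g h} : gconv_rep G lam Phi Psi P f g h ->
  exists f' g', gconv_rep G lam Phi Psi P f' g' (fun x => h x * b (grange G x)).
Proof.
move=> rep; have [ef eg _ _] := rep.
have [M [M1 bM]] := C0_units_bounded bC; have M0 : 0 < M := lt_le_trans ltr01 M1.
have [bre [bim _]] := bC.
have mre := range_multiplier_real bre (fun u Gu => (bM u Gu).1).
have mimi : range_multiplier G (fun z => (cim (b (grange G z)))%:C * 'i) M.
  rewrite -[M]mulr1; apply: range_multiplierM (ltW M0) _ _.
    exact: range_multiplier_real bim (fun u Gu => (bM u Gu).2).
  by apply: range_multiplier_cst; rewrite cabsi.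
exists (interleave f f).
exists (interleave (fun n z => g n z * (cre (b (grange G z)))%:C)
                   (fun n z => g n z * ((cim (b (grange G z)))%:C * 'i))).
have -> : (fun x => h x * b (grange G x)) = (fun x => b (grange G x) * h x).
  by apply/funext => x; rewrite mulrC.
apply: (gconv_rep_mul G lam Phi Psi (fun x => b (grange G x)) rep).
- exact: E0P_dominated_refl M1 ef.
- exact: E0P_dominated_refl M1 ef.
- exact: E0P_dominated_mulr NPsi M0 mre eg.
- exact: E0P_dominated_mulr NPsi M0 mimi eg.
- by move=> x n /=; rewrite (gconv_mull_range G lam _ _ (fun u => cre (b u))).
- move=> x n /=.
  have -> : (fun z => g n z * ((cim (b (grange G z)))%:C * 'i)) =
      (fun z => g n z * (cim (b (grange G z)))%:C * 'i).
    by apply/funext => z; rewrite mulrA.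
  by rewrite gconv_mulri (gconv_mull_range G lam _ _ (fun u => cim (b u))) mulrA.
Qed.

End Actions.

Theorem lemma4p2 (R : realType) (T : ptopologicalType)
  (G : topological_groupoid T)
  (lam : T -> {measure set (borelT T) -> \bar R})
  (Phi Psi : R -> R) :
  hausdorff_space T -> locally_compact [set: T] -> @second_countable T ->
  left_haar_system G lam ->
  Nfunction Phi -> Nfunction Psi -> complementary Phi Psi ->
  Delta2 T Phi -> Delta2 T Psi ->
  forall (b h : T -> R[i]),
    C0_units G b -> inA G lam Phi Psi h ->
    inA G lam Phi Psi (fun x => b (gsource G x) * h x) /\
    inA G lam Phi Psi (fun x => h x * b (grange G x)).
Proof.
move=> _ _ _ _ NPhi NPsi _ _ _ b h bC [P [KP [hc [f [g rep]]]]].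
have [fs [gs reps]] := gconv_rep_mul_source NPhi NPsi bC rep.
have [fr [gr repr]] := gconv_rep_mul_range NPsi bC rep.
split; exists P; split => //; split.
- exact: Cc_mull (C0_units_ccontinuous_source bC) hc.
- by exists fs, gs.
- exact: Cc_mulr hc (C0_units_ccontinuous_range bC).
- by exists fr, gr.
Qed.
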